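(* For an entire function $G$, the condition $\limsup_{|z|\to\infty}\operatorname{Re}(\overline{z}G(z))\le 0$ holds if and only if $G(z)=az+b$ with either (i) $a\in\mathbb{C}_-$ and $b\in\mathbb{C}$, or (ii) $a\in i\mathbb{R}$ and $b=0$.
   Context: $\mathbb{C}_-:=\{z\in\mathbb{C}:\operatorname{Re}z<0\}$. *)

From Stdlib Require Import Reals.
From Coquelicot Require Import Coquelicot.
Open Scope R_scope.

Definition entire (G : C -> C) : Prop :=
  forall z : C, ex_derive (K := C_AbsRing) (V := C_NormedModule) G z.

Definition limsup_at_infty_le0 (f : C -> R) : Prop :=
  forall eps : R, 0 < eps ->
    exists M : R, forall z : C, M < Cmod z -> f z <= eps.

Definition in_Cminus (a : C) : Prop := Re a < 0.
Definition in_iR (a : C) : Prop := Re a = 0.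

(* Suppose Re (conj w * G w) <= mu for |w| = r and let h(t) = G(r e^{it}) e^{-it}, so that
   Re h <= mu / r.  Cauchy's formula for G at z and at 0, together with the mean value property
   of the reflected function G(u) conj(z)^2 r / (r^2 - conj(z) u), gives
     2 pi r (G z - G 0) - z int h = int 2 Re h * z^2 / (r e^{it} - z) + O(|z|^2 / r).
   Since |Re h| <= 2 mu / r - Re h, whose integral is 4 pi mu / r - Re (int h), the right-hand
   side is O(|z|^2 (1 + |int h|) / r).  Taking z = 1 bounds int h / (2 pi r) uniformly in r, and
   letting r -> oo shows that G is affine.  For G z = a z + b we have
   Re (conj z * G z) = Re a |z|^2 + Re (conj z * b), and the sign conditions follow along rays.
   Cauchy's formula itself follows from Goursat's bisection argument applied to the straight-line
   homotopy between two circles. *)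

From Stdlib Require Import Reals Lra Psatz.
From Coquelicot Require Import Coquelicot.
Open Scope R_scope.

Lemma le_0_of_le_eps (x : R) : (forall eps, 0 < eps -> x <= eps) -> x <= 0.
Proof.
  intros H. apply Rle_plus_epsilon. intros eps Heps. rewrite Rplus_0_l. auto.
Qed.

Lemma Cmod_le_eps_eq0 (z : C) : (forall eps, 0 < eps -> Cmod z <= eps) -> z = 0%C.
Proof.
  intros H. apply Cmod_eq_0. apply Rle_antisym; [apply le_0_of_le_eps, H | apply Cmod_ge_0].
Qed.

Lemma le_0_of_le_div_large (x K r0 : R) :
  0 < r0 -> (forall r, r0 <= r -> x <= K / r) -> x <= 0.
Proof.
  intros Hr0 H. apply le_0_of_le_eps. intros eps Heps.
  set (r := Rmax r0 (Rabs K / eps)).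
  assert (Hr : r0 <= r) by apply Rmax_l.
  assert (HK : Rabs K / eps <= r) by apply Rmax_r.
  assert (HKr : Rabs K <= eps * r).
  { apply Rmult_le_compat_l with (r := eps) in HK; [|lra].
    unfold Rdiv in HK. rewrite <- Rmult_assoc, (Rmult_comm eps), Rmult_assoc, Rinv_r in HK; lra. }
  eapply Rle_trans; [apply H, Hr|].
  apply Rmult_le_reg_r with r; [lra|]. unfold Rdiv. rewrite Rmult_assoc, Rinv_l by lra.
  pose proof (Rle_abs K). lra.
Qed.

Lemma Rdiv_le_self (x r : R) : 0 <= x -> 1 <= r -> x / r <= x.
Proof. intros Hx Hr. apply Rmult_le_reg_r with r; [lra|]. field_simplify; nra. Qed.

Lemma Cconj_RtoC (x : R) : Cconj (RtoC x) = RtoC x.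
Proof. apply injective_projections; unfold Cconj, RtoC; simpl; ring. Qed.

Lemma Cplus_Cconj (z : C) : (z + Cconj z)%C = RtoC (2 * Re z).
Proof. apply injective_projections; unfold Cconj, RtoC, Re; simpl; ring. Qed.

Lemma Re_RtoC_mult (x : R) (z : C) : Re (RtoC x * z) = x * Re z.
Proof. unfold Re, RtoC, Cmult; simpl. ring. Qed.

Definition cis (t : R) : C := (cos t, sin t).

Lemma Cmod_cis t : Cmod (cis t) = 1.
Proof.
  unfold Cmod, cis; cbn [fst snd].
  replace (cos t ^ 2 + sin t ^ 2) with 1; [apply sqrt_1|].
  pose proof (sin2_cos2 t) as H. unfold Rsqr in H. nra.
Qed.

Lemma cis_neq0 t : cis t <> 0%C.
Proof. intros E. pose proof (Cmod_cis t) as H. rewrite E, Cmod_0 in H. lra. Qed.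

Lemma Cconj_cis t : Cconj (cis t) = (/ cis t)%C.
Proof.
  assert (H : (cis t * Cconj (cis t))%C = 1%C).
  { rewrite <- Cmod2_conj, Cmod_cis. f_equal. ring. }
  field_simplify_eq; [|apply cis_neq0]. rewrite Cmult_comm. exact H.
Qed.

Lemma Cmod_le_Rabs_Re_Im (z : C) : Cmod z <= Rabs (Re z) + Rabs (Im z).
Proof.
  destruct z as [x y]. unfold Cmod, Re, Im; cbn [fst snd].
  pose proof (Rabs_pos x); pose proof (Rabs_pos y).
  rewrite <- (sqrt_pow2 (Rabs x + Rabs y)) by lra.
  apply sqrt_le_1_alt. rewrite <- (pow2_abs x), <- (pow2_abs y). nra.
Qed.

Lemma im_le_Cmod (z : C) : Rabs (Im z) <= Cmod z.
Proof.
  destruct z as [x y]. unfold Cmod, Im; cbn [fst snd].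
  rewrite <- sqrt_Rsqr_abs. apply sqrt_le_1_alt. unfold Rsqr. nra.
Qed.

Lemma Rabs_sin_sub_le u t : Rabs (sin u - sin t) <= Rabs (u - t).
Proof.
  destruct (MVT_abs sin cos t u) as [c [-> _]]; [intros; apply derivable_pt_lim_sin|].
  pose proof (COS_bound c). pose proof (Rabs_pos (u - t)).
  assert (Rabs (cos c) <= 1) by (apply Rabs_le; lra). nra.
Qed.

Lemma Rabs_cos_sub_le u t : Rabs (cos u - cos t) <= Rabs (u - t).
Proof.
  destruct (MVT_abs cos (fun x => - sin x) t u) as [c [-> _]]; [intros; apply derivable_pt_lim_cos|].
  pose proof (SIN_bound c). pose proof (Rabs_pos (u - t)).
  assert (Rabs (- sin c) <= 1) by (apply Rabs_le; lra). nra.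
Qed.

Lemma Cmod_cis_sub_le u t : Cmod (cis u - cis t) <= 2 * Rabs (u - t).
Proof.
  eapply Rle_trans; [apply Cmod_le_Rabs_Re_Im|]. unfold cis; simpl.
  pose proof (Rabs_cos_sub_le u t); pose proof (Rabs_sin_sub_le u t).
  unfold Rminus in *. lra.
Qed.

Lemma Cmod_scal_cis (r t : R) : 0 <= r -> Cmod (RtoC r * cis t) = r.
Proof. intros Hr. rewrite Cmod_mult, Cmod_R, Cmod_cis, Rabs_pos_eq; lra. Qed.

Lemma Cmod_scal_cis_sub_le (r u t : R) :
  Cmod (RtoC r * cis u - RtoC r * cis t) <= 2 * Rabs r * Rabs (u - t).
Proof.
  replace (RtoC r * cis u - RtoC r * cis t)%C with (RtoC r * (cis u - cis t))%C by ring.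
  rewrite Cmod_mult, Cmod_R. pose proof (Cmod_cis_sub_le u t). pose proof (Rabs_pos r). nra.
Qed.

(** * Complex derivatives *)

(* Unlike in [entire], the codomain is [C] as a module over itself, the setting of
   Coquelicot's product and chain rules. *)
Definition is_Cderive (f : C -> C) (w l : C) : Prop :=
  @is_derive C_AbsRing (AbsRing_NormedModule C_AbsRing) f w l.

Definition ex_Cderive (f : C -> C) (w : C) : Prop := exists l, is_Cderive f w l.

Lemma entire_ex_Cderive (G : C -> C) : entire G -> forall w, ex_Cderive G w.
Proof.
  intros HG w. destruct (HG w) as [l [_ Hl]]. exists l.
  split; [apply is_linear_scal_l|]. exact Hl.
Qed.

Lemma is_Cderive_approx f w l : is_Cderive f w l ->
  forall eps, 0 < eps -> exists d, 0 < d /\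
    forall u, Cmod (u - w) < d -> Cmod (f u - f w - l * (u - w)) <= eps * Cmod (u - w).
Proof.
  intros [_ H] eps Heps.
  destruct (H w (fun P HP => HP) (mkposreal eps Heps)) as [d Hd].
  exists d. split; [apply cond_pos|]. intros u Hu.
  rewrite (Cmult_comm l). exact (Hd u Hu).
Qed.

Lemma is_Cderive_of_approx f w l :
  (forall eps, 0 < eps -> exists d, 0 < d /\
    forall u, Cmod (u - w) < d -> Cmod (f u - f w - l * (u - w)) <= eps * Cmod (u - w)) ->
  is_Cderive f w l.
Proof.
  intros H. split; [apply is_linear_scal_l|].
  intros x Hx. apply (@is_filter_lim_locally_unique C_AbsRing (AbsRing_NormedModule C_AbsRing)) in Hx. subst x.
  intros [eps Heps]. destruct (H eps Heps) as [d [Hd Hfd]].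
  exists (mkposreal d Hd). intros u Hu. simpl.
  rewrite (Cmult_comm _ l). exact (Hfd u Hu).
Qed.

Lemma ex_Cderive_continuous f w : ex_Cderive f w ->
  forall eps, 0 < eps -> exists d, 0 < d /\ forall u, Cmod (u - w) < d -> Cmod (f u - f w) < eps.
Proof.
  intros [l Hl] eps Heps.
  pose proof (@ex_derive_continuous C_AbsRing (AbsRing_NormedModule C_AbsRing) f w (ex_intro _ l Hl)) as Hc.
  destruct (proj1 (filterlim_locally _ _) Hc (mkposreal eps Heps)) as [d Hd].
  exists d. split; [apply cond_pos|]. intros u Hu. exact (Hd u Hu).
Qed.

Lemma ex_Cderive_ext f g w : (forall u, f u = g u) -> ex_Cderive f w -> ex_Cderive g w.
Proof. intros E [l Hl]. exists l. exact (@is_derive_ext C_AbsRing (AbsRing_NormedModule C_AbsRing) f g w l E Hl). Qed.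

Lemma ex_Cderive_affine (a b w : C) : ex_Cderive (fun u => a * u + b)%C w.
Proof.
  exists a. apply is_Cderive_of_approx. intros eps Heps. exists 1. split; [lra|]. intros u _.
  replace (a * u + b - (a * w + b) - a * (u - w))%C with (RtoC 0) by ring.
  rewrite Cmod_0. pose proof (Cmod_ge_0 (u - w)). nra.
Qed.

Lemma ex_Cderive_mult f g w : ex_Cderive f w -> ex_Cderive g w -> ex_Cderive (fun u => f u * g u)%C w.
Proof.
  intros [lf Hf] [lg Hg]. eexists. apply (is_derive_mult (K := C_AbsRing)); eauto.
  intros; apply Cmult_comm.
Qed.

Lemma ex_Cderive_comp f g w : ex_Cderive f (g w) -> ex_Cderive g w -> ex_Cderive (fun u => f (g u)) w.
Proof.
  intros [lf Hf] [lg Hg]. eexists.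
  exact (@is_derive_comp C_AbsRing (AbsRing_NormedModule C_AbsRing) f g w lf lg Hf Hg).
Qed.

(* [1/u - 1/w + (u - w)/w^2 = (u - w)^2 / (u w^2)], and [|u| >= |w|/2] near [w]. *)
Lemma ex_Cderive_Cinv (w : C) : w <> 0%C -> ex_Cderive Cinv w.
Proof.
  intros Hw. exists (- / (w * w))%C. apply is_Cderive_of_approx. intros eps Heps.
  set (m := Cmod w). assert (Hm : 0 < m) by (apply Cmod_gt_0; auto).
  exists (Rmin (m / 2) (eps * m ^ 3 / 2)). split.
  { apply Rmin_pos; [lra|]. apply Rdiv_lt_0_compat; [|lra]. apply Rmult_lt_0_compat; [lra|]. apply pow_lt; lra. }
  intros u Hu. set (h := (u - w)%C) in *.
  assert (Hh1 : Cmod h < m / 2) by (eapply Rlt_le_trans; [exact Hu | apply Rmin_l]).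
  assert (Hh2 : Cmod h < eps * m ^ 3 / 2) by (eapply Rlt_le_trans; [exact Hu | apply Rmin_r]).
  assert (Hu2 : m / 2 <= Cmod u).
  { pose proof (Cmod_triangle u (- h)) as T. rewrite Cmod_opp in T.
    replace (u + - h)%C with w in T by (unfold h; ring). fold m in T. lra. }
  assert (Hu0 : u <> 0%C) by (intros E; rewrite E, Cmod_0 in Hu2; lra).
  replace (/ u - / w - - / (w * w) * h)%C with (h * h / (u * (w * w)))%C
    by (unfold h; field; auto).
  rewrite Cmod_div by (repeat apply Cmult_neq_0; auto). rewrite !Cmod_mult. fold m.
  pose proof (Cmod_ge_0 h).
  apply Rmult_le_reg_r with (Cmod u * (m * m)); [apply Rmult_lt_0_compat; nra|].
  field_simplify; [|split; lra].
  assert (Hb : Cmod h <= Cmod u * m ^ 2 * eps).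
  { assert (0 < eps * m ^ 2) by (apply Rmult_lt_0_compat; [lra | apply pow_lt; lra]).
    replace (eps * m ^ 3 / 2) with (eps * m ^ 2 * (m / 2)) in Hh2 by field. nra. }
  replace (Cmod h ^ 2) with (Cmod h * Cmod h) by ring.
  rewrite !Rmult_assoc. apply Rmult_le_compat_l; [lra|]. rewrite <- !Rmult_assoc. exact Hb.
Qed.

Lemma ex_Cderive_inv_affine (a b w : C) : (a * w + b <> 0)%C -> ex_Cderive (fun u => / (a * u + b))%C w.
Proof.
  intros Hw. apply (ex_Cderive_comp Cinv (fun u => a * u + b)%C w).
  - now apply ex_Cderive_Cinv.
  - apply ex_Cderive_affine.
Qed.

Lemma ex_Cderive_inv_sub (z w : C) : w <> z -> ex_Cderive (fun u => / (u - z))%C w.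
Proof.
  intros Hw. apply (ex_Cderive_ext (fun u => / (1 * u + - z))%C).
  - intros u. f_equal. ring.
  - apply ex_Cderive_inv_affine. intros E. apply Hw.
    replace w with (1 * w + - z + z)%C by ring. rewrite E. ring.
Qed.

(* Continuity for the metric [Cmod], where Coquelicot's rules for [C_AbsRing] apply;
   [ex_RInt_Ccontinuous] transfers it to the product structure used by [RInt]. *)
Notation Ccontinuous h t := (@continuous R_UniformSpace (AbsRing_UniformSpace C_AbsRing) h t).

Lemma Ccontinuous_of_Lipschitz (P : R -> C) (t L : R) :
  (forall u, Cmod (P u - P t) <= L * Rabs (u - t)) -> Ccontinuous P t.
Proof.
  intros H. apply filterlim_locally. intros [eps Heps].
  assert (HL : 0 < Rabs L + 1) by (pose proof (Rabs_pos L); lra).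
  exists (mkposreal _ (Rdiv_lt_0_compat _ _ Heps HL)). intros u Hu.
  change (Rabs (u - t) < eps / (Rabs L + 1)) in Hu. change (Cmod (P u - P t) < eps).
  eapply Rle_lt_trans; [apply H|].
  pose proof (Rabs_pos (u - t)). pose proof (Rle_abs L).
  apply Rle_lt_trans with ((Rabs L + 1) * Rabs (u - t)); [nra|].
  apply Rmult_lt_compat_l with (r := Rabs L + 1) in Hu; [|lra].
  replace ((Rabs L + 1) * (eps / (Rabs L + 1))) with eps in Hu by (field; lra). exact Hu.
Qed.

Lemma Ccontinuous_scal_cis (r t : R) : Ccontinuous (fun u => RtoC r * cis u)%C t.
Proof. apply (Ccontinuous_of_Lipschitz _ _ (2 * Rabs r)). intros u. apply Cmod_scal_cis_sub_le. Qed.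

Lemma Ccontinuous_circle (c : C) (r t : R) : Ccontinuous (fun u => c + RtoC r * cis u)%C t.
Proof.
  apply (Ccontinuous_of_Lipschitz _ _ (2 * Rabs r)). intros u.
  replace (c + RtoC r * cis u - (c + RtoC r * cis t))%C with (RtoC r * cis u - RtoC r * cis t)%C by ring.
  apply Cmod_scal_cis_sub_le.
Qed.

Lemma Ccontinuous_comp (k : C -> C) (P : R -> C) (t : R) :
  ex_Cderive k (P t) -> Ccontinuous P t -> Ccontinuous (fun u => k (P u)) t.
Proof.
  intros [l Hk] HP.
  apply (@continuous_comp R_UniformSpace (AbsRing_UniformSpace C_AbsRing) (AbsRing_UniformSpace C_AbsRing));
    [exact HP|].
  exact (@ex_derive_continuous C_AbsRing (AbsRing_NormedModule C_AbsRing) k (P t) (ex_intro _ l Hk)).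
Qed.

Lemma Ccontinuous_mult_comp (k : C -> C) (P q : R -> C) (t : R) :
  ex_Cderive k (P t) -> Ccontinuous P t -> Ccontinuous q t ->
  Ccontinuous (fun u => k (P u) * q u)%C t.
Proof.
  intros Hk HP Hq. apply (continuous_mult (K := C_AbsRing) (fun u => k (P u)) q); [|exact Hq].
  now apply Ccontinuous_comp.
Qed.

Lemma ex_RInt_Ccontinuous (h : R -> C) (a b : R) :
  (forall t, Rmin a b <= t <= Rmax a b -> Ccontinuous h t) ->
  @ex_RInt C_R_CompleteNormedModule h a b.
Proof.
  intros H. apply ex_RInt_continuous. intros t Ht.
  apply filterlim_locally. intros eps.
  destruct (proj1 (filterlim_locally _ _) (H t Ht) eps) as [d Hd]. exists d. intros u Hu.
  specialize (Hd u Hu). change (Cmod (h u - h t) < eps) in Hd.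
  pose proof (re_le_Cmod (h u - h t)%C). pose proof (im_le_Cmod (h u - h t)%C).
  destruct (h u) as [x1 y1], (h t) as [x2 y2]. unfold Re, Im in *; simpl in *.
  split; [change (Rabs (x1 - x2) < eps) | change (Rabs (y1 - y2) < eps)]; unfold Rminus; lra.
Qed.

Lemma norm_C_R (z : C) : @norm R_AbsRing C_R_NormedModule z = Cmod z.
Proof.
  unfold norm; simpl. unfold prod_norm, Cmod.
  change (sqrt (Rabs (fst z) ^ 2 + Rabs (snd z) ^ 2) = sqrt (fst z ^ 2 + snd z ^ 2)).
  rewrite !pow2_abs. reflexivity.
Qed.

Lemma is_RInt_Cmult_l (f : R -> C) (a b : R) (l c : C) :
  @is_RInt C_R_NormedModule f a b l ->
  @is_RInt C_R_NormedModule (fun t => c * f t)%C a b (c * l)%C.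
Proof.
  intros H.
  pose proof (is_RInt_fct_extend_fst _ _ _ _ H) as H1.
  pose proof (is_RInt_fct_extend_snd _ _ _ _ H) as H2.
  destruct c as [c1 c2].
  apply (is_RInt_fct_extend_pair (U := R_NormedModule) (V := R_NormedModule)).
  - eapply is_RInt_ext; [|exact (is_RInt_minus _ _ _ _ _ _ (is_RInt_scal _ _ _ c1 _ H1) (is_RInt_scal _ _ _ c2 _ H2))].
    intros; simpl. unfold minus, plus, opp, scal; simpl. unfold mult; simpl. ring.
  - eapply is_RInt_ext; [|exact (is_RInt_plus _ _ _ _ _ _ (is_RInt_scal _ _ _ c1 _ H2) (is_RInt_scal _ _ _ c2 _ H1))].
    intros; simpl. unfold minus, plus, opp, scal; simpl. unfold mult; simpl. ring.
Qed.

Lemma is_RInt_Cconj (f : R -> C) (a b : R) (l : C) :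
  @is_RInt C_R_NormedModule f a b l ->
  @is_RInt C_R_NormedModule (fun t => Cconj (f t)) a b (Cconj l).
Proof.
  intros H. apply (is_RInt_fct_extend_pair (U := R_NormedModule) (V := R_NormedModule)).
  - exact (is_RInt_fct_extend_fst _ _ _ _ H).
  - exact (is_RInt_opp _ _ _ _ (is_RInt_fct_extend_snd _ _ _ _ H)).
Qed.

Lemma is_RInt_C_const (c : C) (a b : R) :
  @is_RInt C_R_NormedModule (fun _ => c) a b (RtoC (b - a) * c)%C.
Proof.
  eapply is_RInt_ext; [| evar_last; [apply is_RInt_const | apply scal_R_Cmult]]. reflexivity.
Qed.

Lemma Cmod_is_RInt_le (f : R -> C) (g : R -> R) (a b : R) (lf : C) (lg : R) : a <= b ->
  (forall t, a <= t <= b -> Cmod (f t) <= g t) ->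
  @is_RInt C_R_NormedModule f a b lf -> is_RInt g a b lg -> Cmod lf <= lg.
Proof.
  intros Hab Hfg Hf Hg. rewrite <- norm_C_R. eapply norm_RInt_le; eauto.
  intros; rewrite norm_C_R; auto.
Qed.

Lemma Cmod_is_RInt_sub_le (f g : R -> C) (a b K : R) (lf lg : C) : a <= b ->
  (forall t, a <= t <= b -> Cmod (f t - g t) <= K) ->
  @is_RInt C_R_NormedModule f a b lf -> @is_RInt C_R_NormedModule g a b lg ->
  Cmod (lf - lg) <= (b - a) * K.
Proof.
  intros Hab HK Hf Hg.
  apply (Cmod_is_RInt_le (fun t => f t - g t)%C (fun _ => K) a b); auto.
  - exact (is_RInt_minus _ _ _ _ _ _ Hf Hg).
  - evar_last; [apply is_RInt_const | reflexivity].
Qed.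

Lemma RInt_C_Cmult_l (h : R -> C) (c : C) (a b : R) :
  @ex_RInt C_R_CompleteNormedModule h a b ->
  @RInt C_R_CompleteNormedModule (fun t => c * h t)%C a b = (c * @RInt C_R_CompleteNormedModule h a b)%C.
Proof.
  intros H. apply (@is_RInt_unique C_R_CompleteNormedModule).
  apply is_RInt_Cmult_l. exact (@RInt_correct C_R_CompleteNormedModule _ _ _ H).
Qed.

Lemma RInt_C_Chasles (h : R -> C) (a b c : R) :
  @ex_RInt C_R_CompleteNormedModule h a b -> @ex_RInt C_R_CompleteNormedModule h b c ->
  (@RInt C_R_CompleteNormedModule h a b + @RInt C_R_CompleteNormedModule h b c)%C =
  @RInt C_R_CompleteNormedModule h a c.
Proof. exact (@RInt_Chasles C_R_CompleteNormedModule h a b c). Qed.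

Lemma Cmod_is_RInt_mult_sub_le (u v q : R -> C) (a b K L : R) (lu lv : C) : a <= b ->
  (forall x, a <= x <= b -> Cmod (u x - v x) <= K) -> (forall x, a <= x <= b -> Cmod (q x) <= L) ->
  @is_RInt C_R_NormedModule (fun x => u x * q x)%C a b lu ->
  @is_RInt C_R_NormedModule (fun x => v x * q x)%C a b lv ->
  Cmod (lu - lv) <= (b - a) * (K * L).
Proof.
  intros Hab HK HL Hu Hv.
  apply (Cmod_is_RInt_sub_le (fun x => u x * q x)%C (fun x => v x * q x)%C a b _ lu lv Hab);
    [|exact Hu | exact Hv].
  intros x Hx. replace (u x * q x - v x * q x)%C with ((u x - v x) * q x)%C by ring.
  rewrite Cmod_mult. apply Rmult_le_compat; auto using Cmod_ge_0.
Qed.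

Lemma is_RInt_C_derive (P D : R -> C) (a b : R) :
  (forall u, is_derive (fun u => Re (P u)) u (Re (D u))) ->
  (forall u, is_derive (fun u => Im (P u)) u (Im (D u))) ->
  (forall u, continuous (fun u => Re (D u)) u) ->
  (forall u, continuous (fun u => Im (D u)) u) ->
  @is_RInt C_R_NormedModule D a b (P b - P a)%C.
Proof.
  intros H1 H2 H3 H4.
  replace (P b - P a)%C with (Re (P b) - Re (P a), Im (P b) - Im (P a))
    by (destruct (P a), (P b); reflexivity).
  apply (is_RInt_fct_extend_pair (U := R_NormedModule) (V := R_NormedModule) D).
  - apply (is_RInt_derive (fun u => Re (P u)) (fun u => fst (D u))); intros x _; auto.
  - apply (is_RInt_derive (fun u => Im (P u)) (fun u => snd (D u))); intros x _; auto.
Qed.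

(** * Goursat's bisection argument *)

Lemma nested_intervals_common_point (lo hi : nat -> R) :
  (forall n m, (n <= m)%nat -> lo n <= lo m /\ hi m <= hi n) -> (forall n, lo n <= hi n) ->
  exists x, forall n, lo n <= x <= hi n.
Proof.
  intros Hmono Hle.
  assert (Hlohi : forall n m, lo n <= hi m).
  { intros n m. destruct (Nat.le_ge_cases n m) as [H|H]; pose proof (Hmono _ _ H);
      [pose proof (Hle m) | pose proof (Hle n)]; lra. }
  destruct (completeness (fun x => exists n, x = lo n)) as [x [Hub Hlub]].
  - exists (hi O). intros y [n ->]. apply Hlohi.
  - exists (lo O), O. reflexivity.
  - exists x. intros n. split.
    + apply Hub. exists n. reflexivity.
    + apply Hlub. intros y [m ->]. apply Hlohi.
Qed.

Lemma exists_pow2_gt (x : R) : exists n, x < 2 ^ n.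
Proof.
  destruct (Pow_x_infinity 2 ltac:(rewrite Rabs_pos_eq; lra) (x + 1)) as [n Hn].
  exists n. specialize (Hn n (Nat.le_refl n)). rewrite Rabs_pos_eq in Hn; [lra|].
  apply pow_le. lra.
Qed.

Record rect := Rect { s_lo : R; s_hi : R; t_lo : R; t_hi : R }.

Definition quarter (left bottom : bool) (r : rect) : rect :=
  let sm := (s_lo r + s_hi r) / 2 in
  let tm := (t_lo r + t_hi r) / 2 in
  Rect (if left then s_lo r else sm) (if left then sm else s_hi r)
       (if bottom then t_lo r else tm) (if bottom then tm else t_hi r).

Definition sub_rect (q r : rect) : Prop :=
  s_lo r <= s_lo q /\ s_lo q <= s_hi q /\ s_hi q <= s_hi r /\
  t_lo r <= t_lo q /\ t_lo q <= t_hi q /\ t_hi q <= t_hi r.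

Lemma quarter_sub_rect i j r : s_lo r <= s_hi r -> t_lo r <= t_hi r ->
  sub_rect (quarter i j r) r /\
  s_hi (quarter i j r) - s_lo (quarter i j r) = (s_hi r - s_lo r) / 2 /\
  t_hi (quarter i j r) - t_lo (quarter i j r) = (t_hi r - t_lo r) / 2.
Proof. intros Hs Ht. unfold sub_rect. destruct i, j; simpl; repeat split; lra. Qed.

Lemma sub_rect_trans q r p : sub_rect q r -> sub_rect r p -> sub_rect q p.
Proof. unfold sub_rect. lra. Qed.

Section Bisection.

Variable J : R -> R -> R -> R -> C.
Variables a b c d : R.
Hypothesis Hab : a <= b.
Hypothesis Hcd : c <= d.

Let base := Rect a b c d.
Let Jr (r : rect) : C := J (s_lo r) (s_hi r) (t_lo r) (t_hi r).

Hypothesis J_split_s : forall s1 s2 t1 t2, sub_rect (Rect s1 s2 t1 t2) base ->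
  J s1 s2 t1 t2 = (J s1 ((s1 + s2) / 2) t1 t2 + J ((s1 + s2) / 2) s2 t1 t2)%C.
Hypothesis J_split_t : forall s1 s2 t1 t2, sub_rect (Rect s1 s2 t1 t2) base ->
  J s1 s2 t1 t2 = (J s1 s2 t1 ((t1 + t2) / 2) + J s1 s2 ((t1 + t2) / 2) t2)%C.
Hypothesis J_small : forall s t, a <= s <= b -> c <= t <= d ->
  forall eps, 0 < eps -> exists del, 0 < del /\
  forall s1 s2 t1 t2, sub_rect (Rect s1 s2 t1 t2) base -> s1 <= s <= s2 -> t1 <= t <= t2 ->
    s2 - s1 < del -> t2 - t1 < del -> Cmod (J s1 s2 t1 t2) <= eps * (s2 - s1 + (t2 - t1)) ^ 2.

Lemma Jr_quarters r : sub_rect r base ->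
  Jr r = (Jr (quarter true true r) + Jr (quarter false true r)
          + Jr (quarter true false r) + Jr (quarter false false r))%C.
Proof.
  destruct r as [s1 s2 t1 t2]. intros Hr. unfold Jr, quarter; simpl.
  rewrite J_split_s by exact Hr.
  destruct Hr as (? & ? & ? & ? & ? & ?); simpl in *.
  rewrite (J_split_t s1), (J_split_t ((s1 + s2) / 2)) by (unfold sub_rect, base; simpl; lra).
  ring.
Qed.

(* The last quarter needs no test: by [Jr_quarters] one of the four carries a fourth of [|Jr r|]. *)
Definition bisect (r : rect) : rect :=
  if Rle_dec (Cmod (Jr r) / 4) (Cmod (Jr (quarter true true r))) then quarter true true r else
  if Rle_dec (Cmod (Jr r) / 4) (Cmod (Jr (quarter false true r))) then quarter false true r else
  if Rle_dec (Cmod (Jr r) / 4) (Cmod (Jr (quarter true false r))) then quarter true false r else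
  quarter false false r.

Lemma bisect_spec r : sub_rect r base ->
  Cmod (Jr r) / 4 <= Cmod (Jr (bisect r)) /\ sub_rect (bisect r) r /\
  s_hi (bisect r) - s_lo (bisect r) = (s_hi r - s_lo r) / 2 /\
  t_hi (bisect r) - t_lo (bisect r) = (t_hi r - t_lo r) / 2.
Proof.
  intros Hr. pose proof Hr as (_ & Hs & _ & _ & Ht & _).
  unfold bisect.
  destruct (Rle_dec _ _); [split; [assumption | apply quarter_sub_rect; lra]|].
  destruct (Rle_dec _ _); [split; [assumption | apply quarter_sub_rect; lra]|].
  destruct (Rle_dec _ _); [split; [assumption | apply quarter_sub_rect; lra]|].
  split; [| apply quarter_sub_rect; lra].
  pose proof (Jr_quarters r Hr) as E.
  pose proof (Cmod_triangle (Jr (quarter true true r) + Jr (quarter false true r) + Jr (quarter true false r))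
                (Jr (quarter false false r))) as T1.
  pose proof (Cmod_triangle (Jr (quarter true true r) + Jr (quarter false true r)) (Jr (quarter true false r))) as T2.
  pose proof (Cmod_triangle (Jr (quarter true true r)) (Jr (quarter false true r))) as T3.
  rewrite <- E in T1. lra.
Qed.

Let nested (n : nat) : rect := Nat.iter n bisect base.

Lemma nested_spec n :
  sub_rect (nested n) base /\ Cmod (Jr base) / 4 ^ n <= Cmod (Jr (nested n)) /\
  s_hi (nested n) - s_lo (nested n) = (b - a) / 2 ^ n /\
  t_hi (nested n) - t_lo (nested n) = (d - c) / 2 ^ n.
Proof.
  induction n as [|n (Hsub & HJ & Hs & Ht)].
  - unfold nested, sub_rect; simpl. repeat split; lra.
  - change (nested (S n)) with (bisect (nested n)).
    destruct (bisect_spec _ Hsub) as (HJ' & Hsub' & Hs' & Ht').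
    assert (0 < 2 ^ n) by (apply pow_lt; lra).
    assert (0 < 4 ^ n) by (apply pow_lt; lra).
    split; [exact (sub_rect_trans _ _ _ Hsub' Hsub)|].
    simpl pow. split; [|split].
    + replace (Cmod (Jr base) / (4 * 4 ^ n)) with (Cmod (Jr base) / 4 ^ n / 4) by (field; lra). lra.
    + rewrite Hs', Hs. field. lra.
    + rewrite Ht', Ht. field. lra.
Qed.

Lemma nested_mono n m : (n <= m)%nat -> sub_rect (nested m) (nested n).
Proof.
  induction 1 as [|m _ IH].
  - destruct (nested_spec n) as [(H1 & H2 & H3 & H4 & H5 & H6) _]. unfold sub_rect. lra.
  - change (nested (S m)) with (bisect (nested m)).
    apply (sub_rect_trans _ (nested m)); [|exact IH].
    apply bisect_spec, nested_spec.
Qed.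

(* Each bisection keeps a fourth of [|J|] and halves the sides, so [|J a b c d| <= 4^n |J (nested n)|],
   which is [o(1)] by [J_small] at the common point of the nested rectangles. *)
Theorem bisection_vanishes : J a b c d = 0%C.
Proof.
  destruct (nested_intervals_common_point (fun n => s_lo (nested n)) (fun n => s_hi (nested n))) as [s Hs].
  { intros n m Hnm. pose proof (nested_mono n m Hnm). unfold sub_rect in *. lra. }
  { intros n. destruct (nested_spec n) as [(_ & H & _) _]. exact H. }
  destruct (nested_intervals_common_point (fun n => t_lo (nested n)) (fun n => t_hi (nested n))) as [t Ht].
  { intros n m Hnm. pose proof (nested_mono n m Hnm). unfold sub_rect in *. lra. }
  { intros n. destruct (nested_spec n) as [(_ & _ & _ & _ & H & _) _]. exact H. }
  set (L := b - a + (d - c)).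
  change (Jr base = 0%C). apply Cmod_le_eps_eq0. intros eps Heps.
  assert (HL : 0 <= L ^ 2) by apply pow2_ge_0.
  destruct (J_small s t ltac:(pose proof (Hs O); simpl in *; lra) ltac:(pose proof (Ht O); simpl in *; lra)
    (eps / (L ^ 2 + 1)) ltac:(apply Rdiv_lt_0_compat; lra)) as [del [Hdel Hsmall]].
  destruct (exists_pow2_gt (L / del)) as [n Hn].
  destruct (nested_spec n) as (Hsub & HJ & Hws & Hwt).
  assert (H2n : 0 < 2 ^ n) by (apply pow_lt; lra).
  assert (HLn : L / 2 ^ n < del).
  { apply Rmult_lt_reg_r with (2 ^ n / del); [apply Rdiv_lt_0_compat; lra|].
    replace (L / 2 ^ n * (2 ^ n / del)) with (L / del) by (field; lra).
    replace (del * (2 ^ n / del)) with (2 ^ n) by (field; lra). exact Hn. }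
  assert (Hwidth : s_hi (nested n) - s_lo (nested n) + (t_hi (nested n) - t_lo (nested n)) = L / 2 ^ n)
    by (rewrite Hws, Hwt; unfold L; field; lra).
  assert (Hbs : (b - a) / 2 ^ n <= L / 2 ^ n) by (apply Rmult_le_compat_r; [left; apply Rinv_0_lt_compat|unfold L]; lra).
  assert (Hbt : (d - c) / 2 ^ n <= L / 2 ^ n) by (apply Rmult_le_compat_r; [left; apply Rinv_0_lt_compat|unfold L]; lra).
  pose proof (Hsmall _ _ _ _ Hsub (Hs n) (Ht n) ltac:(lra) ltac:(lra)) as Hn_small.
  change (J _ _ _ _) with (Jr (nested n)) in Hn_small. rewrite Hwidth in Hn_small.
  assert (E4 : 4 ^ n = 2 ^ n * 2 ^ n) by (rewrite <- Rpow_mult_distr; f_equal; lra).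
  assert (Hb : Cmod (Jr base) <= eps / (L ^ 2 + 1) * L ^ 2).
  { apply Rmult_le_reg_r with (/ 4 ^ n); [apply Rinv_0_lt_compat, pow_lt; lra|].
    eapply Rle_trans; [apply HJ|]. eapply Rle_trans; [apply Hn_small|].
    right. rewrite E4. field. lra. }
  eapply Rle_trans; [exact Hb|].
  apply Rmult_le_reg_r with (L ^ 2 + 1); [lra|]. field_simplify; lra.
Qed.

End Bisection.

(** * Cauchy's theorem for a homotopy of circles *)

Section Circle_homotopy.

Variables (c0 c1 : C) (r0 r1 : R).

(* Straight-line homotopy between the circles [c0 + r0 e^{it}] and [c0 + c1 + (r0 + r1) e^{it}];
   [hom_ds] and [hom_dt] are its partial derivatives. *)
Definition hom (s t : R) : C := (c0 + RtoC s * c1 + RtoC (r0 + s * r1) * cis t)%C.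
Definition hom_ds (t : R) : C := (c1 + RtoC r1 * cis t)%C.
Definition hom_dt (s t : R) : C := (RtoC (r0 + s * r1) * (Ci * cis t))%C.
Definition hom_bound : R := Cmod c1 + Rabs r1 + Rabs r0 + 1.

Definition affine_primitive (al be w : C) : C := (al * w + be * w * w / 2)%C.

Lemma is_RInt_affine_dt (al be : C) (s t1 t2 : R) :
  @is_RInt C_R_NormedModule (fun t => (al + be * hom s t) * hom_dt s t)%C t1 t2
    (affine_primitive al be (hom s t2) - affine_primitive al be (hom s t1))%C.
Proof.
  apply (is_RInt_C_derive (fun t => affine_primitive al be (hom s t))); intros u;
  destruct al as [a1 a2], be as [b1 b2], c0 as [x0 y0], c1 as [x1 y1];
  unfold affine_primitive, hom, hom_dt, cis, Re, Im, Ci, Cmult, Cplus, Cdiv, Cinv, RtoC; simpl.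
  1, 2: auto_derive; auto; field.
  1, 2: apply (ex_derive_continuous (K := R_AbsRing) (V := R_NormedModule)); auto_derive; auto.
Qed.

Lemma is_RInt_affine_ds (al be : C) (t s1 s2 : R) :
  @is_RInt C_R_NormedModule (fun s => (al + be * hom s t) * hom_ds t)%C s1 s2
    (affine_primitive al be (hom s2 t) - affine_primitive al be (hom s1 t))%C.
Proof.
  apply (is_RInt_C_derive (fun s => affine_primitive al be (hom s t))); intros u;
  destruct al as [a1 a2], be as [b1 b2];
  unfold affine_primitive, hom, hom_ds, cis, Re, Im, Ci, Cmult, Cplus, Cdiv, Cinv, RtoC; simpl.
  1, 2: auto_derive; auto; field.
  1, 2: apply (ex_derive_continuous (K := R_AbsRing) (V := R_NormedModule)); auto_derive; auto.
Qed.

Lemma hom_bound_pos : 0 < hom_bound.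
Proof.
  unfold hom_bound. pose proof (Cmod_ge_0 c1). pose proof (Rabs_pos r1). pose proof (Rabs_pos r0). lra.
Qed.

Lemma Rabs_radius_le s : 0 <= s <= 1 -> Rabs (r0 + s * r1) <= Rabs r0 + Rabs r1.
Proof.
  intros Hs. eapply Rle_trans; [apply Rabs_triang|]. rewrite Rabs_mult, (Rabs_pos_eq s) by lra.
  pose proof (Rabs_pos r1). nra.
Qed.

Lemma hom_Lipschitz s t s' t' : 0 <= s' <= 1 ->
  Cmod (hom s t - hom s' t') <= hom_bound * Rabs (s - s') + 2 * hom_bound * Rabs (t - t').
Proof.
  intros Hs'.
  replace (hom s t - hom s' t')%C
    with (RtoC (s - s') * hom_ds t + RtoC (r0 + s' * r1) * (cis t - cis t'))%C
    by (apply injective_projections; unfold hom, hom_ds, cis, RtoC; simpl; ring).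
  eapply Rle_trans; [apply Cmod_triangle|]. rewrite !Cmod_mult, !Cmod_R.
  pose proof (Cmod_triangle c1 (RtoC r1 * cis t)) as T. rewrite Cmod_mult, Cmod_R, Cmod_cis in T.
  pose proof (Cmod_cis_sub_le t t'). pose proof (Rabs_radius_le s' Hs').
  pose proof (Rabs_pos (s - s')). pose proof (Rabs_pos (t - t')). pose proof (Rabs_pos (r0 + s' * r1)).
  pose proof (Cmod_ge_0 (cis t - cis t')). pose proof (Rabs_pos r0).
  assert (Cmod (hom_ds t) <= hom_bound) by (unfold hom_ds, hom_bound; lra).
  assert (Rabs (r0 + s' * r1) * Cmod (cis t - cis t') <= hom_bound * (2 * Rabs (t - t')))
    by (apply Rmult_le_compat; unfold hom_bound in *; try lra; pose proof (Cmod_ge_0 c1); lra).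
  nra.
Qed.

Lemma Cmod_hom_dt_le s t : 0 <= s <= 1 -> Cmod (hom_dt s t) <= hom_bound.
Proof.
  intros Hs. unfold hom_dt. rewrite !Cmod_mult, Cmod_R, Cmod_Ci, Cmod_cis.
  pose proof (Rabs_radius_le s Hs). unfold hom_bound. pose proof (Cmod_ge_0 c1). lra.
Qed.

Lemma Cmod_hom_ds_le t : Cmod (hom_ds t) <= hom_bound.
Proof.
  unfold hom_ds. eapply Rle_trans; [apply Cmod_triangle|]. rewrite Cmod_mult, Cmod_R, Cmod_cis.
  unfold hom_bound. pose proof (Rabs_pos r0). lra.
Qed.

Lemma hom_dt_Lipschitz s t u : 0 <= s <= 1 -> Cmod (hom_dt s u - hom_dt s t) <= 2 * hom_bound * Rabs (u - t).
Proof.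
  intros Hs.
  replace (hom_dt s u - hom_dt s t)%C with (RtoC (r0 + s * r1) * Ci * (cis u - cis t))%C
    by (unfold hom_dt; ring).
  rewrite !Cmod_mult, Cmod_R, Cmod_Ci.
  pose proof (Cmod_cis_sub_le u t). pose proof (Rabs_radius_le s Hs).
  pose proof (Rabs_pos (r0 + s * r1)). pose proof (Cmod_ge_0 (cis u - cis t)). pose proof (Rabs_pos (u - t)).
  assert (Rabs r0 + Rabs r1 <= hom_bound) by (unfold hom_bound; pose proof (Cmod_ge_0 c1); lra).
  assert (Rabs (r0 + s * r1) * Cmod (cis u - cis t) <= hom_bound * (2 * Rabs (u - t)))
    by (apply Rmult_le_compat; lra).
  lra.
Qed.

Section Holomorphic_integrand.

Variable f : C -> C.
Hypothesis f_holo : forall s t, 0 <= s <= 1 -> ex_Cderive f (hom s t).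

Lemma ex_RInt_dt s t1 t2 : 0 <= s <= 1 ->
  @ex_RInt C_R_CompleteNormedModule (fun t => f (hom s t) * hom_dt s t)%C t1 t2.
Proof.
  intros Hs. apply ex_RInt_Ccontinuous. intros t _. apply Ccontinuous_mult_comp; [now apply f_holo| |].
  - apply (Ccontinuous_of_Lipschitz _ _ (2 * hom_bound)). intros u.
    eapply Rle_trans; [apply hom_Lipschitz; exact Hs|].
    rewrite Rminus_diag, Rabs_R0. lra.
  - apply (Ccontinuous_of_Lipschitz _ _ (2 * hom_bound)). intros u. now apply hom_dt_Lipschitz.
Qed.

Lemma ex_RInt_ds t s1 s2 : 0 <= s1 <= 1 -> 0 <= s2 <= 1 ->
  @ex_RInt C_R_CompleteNormedModule (fun s => f (hom s t) * hom_ds t)%C s1 s2.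
Proof.
  intros H1 H2. apply ex_RInt_Ccontinuous. intros s Hs.
  assert (Hs' : 0 <= s <= 1).
  { split; [eapply Rle_trans, Hs | eapply Rle_trans; [apply Hs|]];
      [apply Rmin_glb | apply Rmax_lub]; lra. }
  apply Ccontinuous_mult_comp; [now apply f_holo| | apply continuous_const].
  apply (Ccontinuous_of_Lipschitz _ _ hom_bound). intros u.
  eapply Rle_trans; [apply hom_Lipschitz; exact Hs'|].
  rewrite Rminus_diag, Rabs_R0. lra.
Qed.

Definition RInt_dt (s t1 t2 : R) : C := @RInt C_R_CompleteNormedModule (fun t => f (hom s t) * hom_dt s t)%C t1 t2.
Definition RInt_ds (t s1 s2 : R) : C := @RInt C_R_CompleteNormedModule (fun s => f (hom s t) * hom_ds t)%C s1 s2.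

(* The integral of [f] along the image under [hom] of the boundary of [[s1,s2] x [t1,t2]]. *)
Definition boundary_RInt s1 s2 t1 t2 : C :=
  (RInt_dt s2 t1 t2 - RInt_dt s1 t1 t2 - RInt_ds t2 s1 s2 + RInt_ds t1 s1 s2)%C.

Lemma boundary_RInt_split_s s1 s2 t1 t2 : 0 <= s1 -> s1 <= s2 -> s2 <= 1 ->
  boundary_RInt s1 s2 t1 t2 =
  (boundary_RInt s1 ((s1 + s2) / 2) t1 t2 + boundary_RInt ((s1 + s2) / 2) s2 t1 t2)%C.
Proof.
  intros H1 H2 H3. unfold boundary_RInt, RInt_ds.
  rewrite <- (RInt_C_Chasles (fun s => f (hom s t1) * hom_ds t1)%C s1 ((s1 + s2) / 2) s2),
    <- (RInt_C_Chasles (fun s => f (hom s t2) * hom_ds t2)%C s1 ((s1 + s2) / 2) s2)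
    by (apply ex_RInt_ds; lra).
  ring.
Qed.

Lemma boundary_RInt_split_t s1 s2 t1 t2 : 0 <= s1 -> s1 <= s2 -> s2 <= 1 ->
  boundary_RInt s1 s2 t1 t2 =
  (boundary_RInt s1 s2 t1 ((t1 + t2) / 2) + boundary_RInt s1 s2 ((t1 + t2) / 2) t2)%C.
Proof.
  intros H1 H2 H3. unfold boundary_RInt, RInt_dt.
  rewrite <- (RInt_C_Chasles (fun t => f (hom s1 t) * hom_dt s1 t)%C t1 ((t1 + t2) / 2) t2),
    <- (RInt_C_Chasles (fun t => f (hom s2 t) * hom_dt s2 t)%C t1 ((t1 + t2) / 2) t2)
    by (apply ex_RInt_dt; lra).
  ring.
Qed.

Lemma boundary_RInt_near_affine_le (al be : C) (K : R) s1 s2 t1 t2 :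
  0 <= s1 -> s1 <= s2 -> s2 <= 1 -> t1 <= t2 ->
  (forall s t, s1 <= s <= s2 -> t1 <= t <= t2 -> Cmod (f (hom s t) - (al + be * hom s t)) <= K) ->
  Cmod (boundary_RInt s1 s2 t1 t2) <= 2 * hom_bound * K * (s2 - s1 + (t2 - t1)).
Proof.
  intros H1 H2 H3 Ht HK. set (F := affine_primitive al be).
  assert (Edt : forall s, s = s1 \/ s = s2 ->
    Cmod (RInt_dt s t1 t2 - (F (hom s t2) - F (hom s t1))) <= (t2 - t1) * (K * hom_bound)).
  { intros s Hs. assert (Hs01 : 0 <= s <= 1) by (destruct Hs; subst; lra).
    apply (Cmod_is_RInt_mult_sub_le (fun t => f (hom s t)) (fun t => al + be * hom s t)%C (hom_dt s));
      [exact Ht | intros t ?; apply HK; destruct Hs; subst; lra | intros; now apply Cmod_hom_dt_le | |].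
    - exact (@RInt_correct C_R_CompleteNormedModule _ _ _ (ex_RInt_dt s t1 t2 Hs01)).
    - apply is_RInt_affine_dt. }
  assert (Eds : forall t, t = t1 \/ t = t2 ->
    Cmod (RInt_ds t s1 s2 - (F (hom s2 t) - F (hom s1 t))) <= (s2 - s1) * (K * hom_bound)).
  { intros t Ht0.
    apply (Cmod_is_RInt_mult_sub_le (fun s => f (hom s t)) (fun s => al + be * hom s t)%C (fun _ => hom_ds t));
      [exact H2 | intros s ?; apply HK; destruct Ht0; subst; lra | intros; apply Cmod_hom_ds_le | |].
    - exact (@RInt_correct C_R_CompleteNormedModule _ _ _ (ex_RInt_ds t s1 s2 ltac:(lra) ltac:(lra))).
    - apply is_RInt_affine_ds. }
  (* the affine part has an exact primitive, so its boundary integral vanishes *)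
  replace (boundary_RInt s1 s2 t1 t2) with
    ((RInt_dt s2 t1 t2 - (F (hom s2 t2) - F (hom s2 t1)))
     - (RInt_dt s1 t1 t2 - (F (hom s1 t2) - F (hom s1 t1)))
     - (RInt_ds t2 s1 s2 - (F (hom s2 t2) - F (hom s1 t2)))
     + (RInt_ds t1 s1 s2 - (F (hom s2 t1) - F (hom s1 t1))))%C
    by (unfold boundary_RInt; ring).
  pose proof (Edt s1 (or_introl eq_refl)). pose proof (Edt s2 (or_intror eq_refl)).
  pose proof (Eds t1 (or_introl eq_refl)). pose proof (Eds t2 (or_intror eq_refl)).
  eapply Rle_trans; [apply Cmod_triangle|].
  eapply Rle_trans; [apply Rplus_le_compat_r, Cmod_triangle|].
  eapply Rle_trans; [apply Rplus_le_compat_r, Rplus_le_compat_r, Cmod_triangle|].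
  rewrite !Cmod_opp. lra.
Qed.

Lemma boundary_RInt_small s t : 0 <= s <= 1 ->
  forall eps, 0 < eps -> exists del, 0 < del /\
  forall s1 s2 t1 t2, 0 <= s1 -> s1 <= s <= s2 -> s2 <= 1 -> t1 <= t <= t2 ->
    s2 - s1 < del -> t2 - t1 < del ->
    Cmod (boundary_RInt s1 s2 t1 t2) <= eps * (s2 - s1 + (t2 - t1)) ^ 2.
Proof.
  intros Hs eps Heps. destruct (f_holo s t Hs) as [l Hl]. set (p := hom s t).
  pose proof hom_bound_pos as HL.
  set (e := eps / (4 * hom_bound ^ 2)).
  assert (He : 0 < e) by (apply Rdiv_lt_0_compat; [lra | nra]).
  destruct (is_Cderive_approx _ _ _ Hl e He) as [d [Hd Happrox]]. fold p in Happrox.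
  exists (d / (4 * hom_bound)). split; [apply Rdiv_lt_0_compat; lra|].
  intros s1 s2 t1 t2 H1 Hs12 H2 Ht12 Hds Hdt.
  set (rho := 2 * hom_bound * (s2 - s1 + (t2 - t1))).
  assert (Hrho : rho < d).
  { apply Rlt_le_trans with (2 * hom_bound * (2 * (d / (4 * hom_bound)))).
    - unfold rho. apply Rmult_lt_compat_l; lra.
    - right. field. lra. }
  eapply Rle_trans.
  { apply (boundary_RInt_near_affine_le (f p - l * p) l (e * rho)); [lra | lra | lra | lra |].
    intros s' t' Hs' Ht'.
    replace (f (hom s' t') - (f p - l * p + l * hom s' t'))%C
      with (f (hom s' t') - f p - l * (hom s' t' - p))%C by ring.
    assert (Hp : Cmod (hom s' t' - p) <= rho).
    { unfold p. eapply Rle_trans; [apply hom_Lipschitz; exact Hs|].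
      assert (Rabs (s' - s) <= s2 - s1) by (apply Rabs_le; lra).
      assert (Rabs (t' - t) <= t2 - t1) by (apply Rabs_le; lra).
      unfold rho. nra. }
    eapply Rle_trans; [apply Happrox; lra|]. apply Rmult_le_compat_l; lra. }
  right. unfold rho, e. field. lra.
Qed.

Theorem RInt_dt_hom_eq : RInt_dt 1 0 (2 * PI) = RInt_dt 0 0 (2 * PI).
Proof.
  assert (HPI : 0 < PI) by apply PI_RGT_0.
  assert (H : boundary_RInt 0 1 0 (2 * PI) = 0%C).
  { apply bisection_vanishes; [lra | lra | | |].
    - intros s1 s2 t1 t2 (H1 & H2 & H3 & _); simpl in *. apply boundary_RInt_split_s; lra.
    - intros s1 s2 t1 t2 (H1 & H2 & H3 & _); simpl in *. apply boundary_RInt_split_t; lra.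
    - intros s t Hs Ht eps Heps. destruct (boundary_RInt_small s t Hs eps Heps) as [del [Hdel Hsmall]].
      exists del. split; [exact Hdel|]. intros s1 s2 t1 t2 (H1 & _ & H3 & _) Hs' Ht'. simpl in *.
      apply Hsmall; lra. }
  assert (Hperiod : RInt_ds (2 * PI) 0 1 = RInt_ds 0 0 1).
  { unfold RInt_ds. apply (@RInt_ext C_R_CompleteNormedModule). intros s _.
    unfold hom, hom_ds, cis. now rewrite cos_2PI, sin_2PI, cos_0, sin_0. }
  unfold boundary_RInt in H. rewrite Hperiod in H.
  replace (RInt_dt 1 0 (2 * PI)) with
    ((RInt_dt 1 0 (2 * PI) - RInt_dt 0 0 (2 * PI) - RInt_ds 0 0 1 + RInt_ds 0 0 1) + RInt_dt 0 0 (2 * PI))%C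
    by ring.
  rewrite H. apply Cplus_0_l.
Qed.

End Holomorphic_integrand.
End Circle_homotopy.

(** * Cauchy's integral formula *)

Section Cauchy_formula.

Variables (f : C -> C) (r : R) (z : C).
Hypothesis Hz : Cmod z < r.
Hypothesis f_holo : forall w, Cmod w <= r -> ex_Cderive f w.

Let r_pos : 0 < r.
Proof. pose proof (Cmod_ge_0 z). lra. Qed.

Let kernel (t : R) : C := (f (RtoC r * cis t) * (RtoC r * cis t / (RtoC r * cis t - z)))%C.

Lemma circle_sub_neq0 t : (RtoC r * cis t - z <> 0)%C.
Proof.
  intros E. assert (Ez : (RtoC r * cis t)%C = z).
  { replace (RtoC r * cis t)%C with (RtoC r * cis t - z + z)%C by ring. rewrite E. ring. }
  pose proof (Cmod_ge_0 z). rewrite <- Ez, Cmod_scal_cis in Hz; lra.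
Qed.

Lemma ex_RInt_Cauchy_kernel : @ex_RInt C_R_CompleteNormedModule kernel 0 (2 * PI).
Proof.
  apply ex_RInt_Ccontinuous. intros t _.
  apply (Ccontinuous_comp (fun u => f u * (u * / (u - z)))%C (fun u => RtoC r * cis u)%C);
    [| apply Ccontinuous_scal_cis].
  pose proof (Cmod_ge_0 z).
  apply ex_Cderive_mult; [apply f_holo; rewrite Cmod_scal_cis; lra|].
  apply ex_Cderive_mult; [| apply ex_Cderive_inv_sub; intros E; apply (circle_sub_neq0 t); rewrite E; ring].
  apply (ex_Cderive_ext (fun u => 1 * u + 0)%C); [intros; ring | apply ex_Cderive_affine].
Qed.

Lemma ex_RInt_small_circle (del : R) : 0 <= del -> del <= r - Cmod z ->
  @ex_RInt C_R_CompleteNormedModule (fun t => f (z + RtoC del * cis t))%C 0 (2 * PI).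
Proof.
  intros Hdel HdelR. apply ex_RInt_Ccontinuous. intros t _.
  apply (Ccontinuous_comp f (fun u => z + RtoC del * cis u)%C); [| apply Ccontinuous_circle].
  apply f_holo. eapply Rle_trans; [apply Cmod_triangle|]. rewrite Cmod_scal_cis; lra.
Qed.

Lemma Cauchy_kernel_hom_holo (del : R) : 0 < del -> del <= r - Cmod z ->
  forall s t, 0 <= s <= 1 -> ex_Cderive (fun u => f u * / (u - z))%C (hom z (- z) del (r - del) s t).
Proof.
  intros Hdel HdelR s t Hs. pose proof (Cmod_ge_0 z) as Hz0.
  assert (E : hom z (- z) del (r - del) s t = (RtoC (1 - s) * z + RtoC (del + s * (r - del)) * cis t)%C)
    by (apply injective_projections; unfold hom, cis, RtoC; simpl; ring).
  rewrite E. assert (Hrad : 0 <= del + s * (r - del)) by nra.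
  apply ex_Cderive_mult.
  - apply f_holo. eapply Rle_trans; [apply Cmod_triangle|].
    rewrite Cmod_mult, Cmod_R, Rabs_pos_eq, Cmod_scal_cis by lra. nra.
  - apply ex_Cderive_inv_sub. intros E'.
    assert (E2 : (RtoC (del + s * (r - del)) * cis t)%C = (RtoC s * z)%C).
    { replace (RtoC s * z)%C
        with (RtoC s * z + (RtoC (1 - s) * z + RtoC (del + s * (r - del)) * cis t - z))%C
        by (rewrite E'; ring).
      apply injective_projections; unfold RtoC; simpl; ring. }
    apply (f_equal Cmod) in E2. rewrite Cmod_scal_cis, Cmod_mult, Cmod_R, Rabs_pos_eq in E2 by lra.
    nra.
Qed.

(* Deform the circle of radius [r] about [0] into the circle of radius [del] about [z],
   along which the kernel becomes [f]. *)
Lemma RInt_Cauchy_kernel_small_circle (del : R) : 0 < del -> del <= r - Cmod z ->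
  @RInt C_R_CompleteNormedModule kernel 0 (2 * PI) =
  @RInt C_R_CompleteNormedModule (fun t => f (z + RtoC del * cis t))%C 0 (2 * PI).
Proof.
  intros Hdel HdelR.
  set (g := fun u => (f u * / (u - z))%C).
  pose proof (Cauchy_kernel_hom_holo del Hdel HdelR) as Hhom.
  pose proof (RInt_dt_hom_eq z (- z) del (r - del) g Hhom) as Heq. unfold RInt_dt in Heq.
  rewrite (@RInt_ext C_R_CompleteNormedModule
    (fun t => g (hom z (- z) del (r - del) 1 t) * hom_dt del (r - del) 1 t)%C (fun t => Ci * kernel t)%C) in Heq.
  2: { intros t _. unfold g, hom_dt, kernel.
       replace (hom z (- z) del (r - del) 1 t) with (RtoC r * cis t)%C
         by (apply injective_projections; unfold hom, cis, RtoC; simpl; ring).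
       replace (del + 1 * (r - del)) with r by ring.
       pose proof (circle_sub_neq0 t).
       match goal with |- ?a = ?b => change (@eq C a b) end. field. auto. }
  rewrite (@RInt_ext C_R_CompleteNormedModule
    (fun t => g (hom z (- z) del (r - del) 0 t) * hom_dt del (r - del) 0 t)%C
    (fun t => Ci * f (z + RtoC del * cis t))%C) in Heq.
  2: { intros t _. unfold g, hom_dt.
       replace (hom z (- z) del (r - del) 0 t) with (z + RtoC del * cis t)%C
         by (apply injective_projections; unfold hom, cis, RtoC; simpl; ring).
       replace (del + 0 * (r - del)) with del by ring.
       replace (z + RtoC del * cis t - z)%C with (RtoC del * cis t)%C by ring.
       assert (RtoC del <> 0%C) by (intros E; apply RtoC_inj in E; lra).
       pose proof (cis_neq0 t).
       match goal with |- ?a = ?b => change (@eq C a b) end. field. auto. }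
  rewrite !RInt_C_Cmult_l in Heq by (apply ex_RInt_Cauchy_kernel || (apply ex_RInt_small_circle; lra)).
  replace (@RInt C_R_CompleteNormedModule kernel 0 (2 * PI))
    with (- Ci * (Ci * @RInt C_R_CompleteNormedModule kernel 0 (2 * PI)))%C
    by (apply injective_projections; unfold Ci, Copp, Cmult; simpl; ring).
  rewrite Heq. apply injective_projections; unfold Ci, Copp, Cmult; simpl; ring.
Qed.

Theorem Cauchy_integral_formula :
  @is_RInt C_R_NormedModule (fun t => f (RtoC r * cis t) * (RtoC r * cis t / (RtoC r * cis t - z)))%C
    0 (2 * PI) (RtoC (2 * PI) * f z)%C.
Proof.
  assert (HPI : 0 < PI) by apply PI_RGT_0. pose proof (Cmod_ge_0 z) as Hz0.
  set (I := @RInt C_R_CompleteNormedModule kernel 0 (2 * PI)).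
  replace (RtoC (2 * PI) * f z)%C with I; [exact (@RInt_correct C_R_CompleteNormedModule _ _ _ ex_RInt_Cauchy_kernel)|].
  assert (Hdiff : (I - RtoC (2 * PI) * f z)%C = 0%C).
  { apply Cmod_le_eps_eq0. intros eps Heps.
    destruct (ex_Cderive_continuous f z (f_holo z ltac:(lra)) (eps / (2 * PI))) as [d [Hd Hcont]].
    { apply Rdiv_lt_0_compat; lra. }
    set (del := Rmin (d / 2) (r - Cmod z)).
    assert (Hdel : 0 < del) by (apply Rmin_pos; lra).
    assert (HdelR : del <= r - Cmod z) by apply Rmin_r.
    unfold I. rewrite (RInt_Cauchy_kernel_small_circle del Hdel HdelR).
    replace eps with ((2 * PI - 0) * (eps / (2 * PI))) by (field; lra).
    apply Cmod_is_RInt_sub_le with (f := fun t => f (z + RtoC del * cis t)%C) (g := fun _ => f z); [lra| | |].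
    - intros t _. left. apply Hcont.
      replace (z + RtoC del * cis t - z)%C with (RtoC del * cis t)%C by ring.
      rewrite Cmod_scal_cis by lra. pose proof (Rmin_l (d / 2) (r - Cmod z)) as Hdd. fold del in Hdd. lra.
    - exact (@RInt_correct C_R_CompleteNormedModule _ _ _ (ex_RInt_small_circle del ltac:(lra) HdelR)).
    - replace (RtoC (2 * PI)) with (RtoC (2 * PI - 0)) by (f_equal; ring). apply is_RInt_C_const. }
  replace I with (I - RtoC (2 * PI) * f z + RtoC (2 * PI) * f z)%C by ring.
  rewrite Hdiff. apply Cplus_0_l.
Qed.

End Cauchy_formula.

Corollary mean_value_property (f : C -> C) (r : R) : 0 < r ->
  (forall w, Cmod w <= r -> ex_Cderive f w) ->
  @is_RInt C_R_NormedModule (fun t => f (RtoC r * cis t)%C) 0 (2 * PI) (RtoC (2 * PI) * f 0%C)%C.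
Proof.
  intros HR Hf.
  eapply is_RInt_ext; [| apply Cauchy_integral_formula; [rewrite Cmod_0; exact HR | exact Hf]].
  intros t _. assert (RtoC r <> 0%C) by (intros E; apply RtoC_inj in E; lra).
  pose proof (cis_neq0 t).
  cbv beta. match goal with |- ?a = ?b => change (@eq C a b) end. field. auto.
Qed.

(** * The defect of the affine approximation *)

(* By Cauchy's formula for derivatives this is [G'(0)]; only its boundedness in [r] is used. *)
Definition circle_slope (G : C -> C) (r : R) : C :=
  (@RInt C_R_CompleteNormedModule (fun t => G (RtoC r * cis t) / cis t)%C 0 (2 * PI) / RtoC (2 * PI * r))%C.

Lemma RInt_eq_circle_slope (G : C -> C) (r : R) : 0 < r ->
  @RInt C_R_CompleteNormedModule (fun t => G (RtoC r * cis t) / cis t)%C 0 (2 * PI) =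
  (RtoC (2 * PI * r) * circle_slope G r)%C.
Proof.
  intros Hr. assert (H2pr : RtoC (2 * PI * r) <> 0%C).
  { pose proof PI_RGT_0. intros E. apply RtoC_inj in E. nra. }
  unfold circle_slope, Cdiv. rewrite (Cmult_comm _ (/ _)), Cmult_assoc, Cinv_r by exact H2pr.
  symmetry. apply Cmult_1_l.
Qed.

(* On [|w| = r], [conj w = r^2 / w], so [conj h] times the Cauchy kernel is the conjugate of
   the holomorphic [reflected] function; adding it turns [h] into [2 Re h]. *)
Lemma defect_integrand_eq (g z : C) (r t : R) : r <> 0 -> (RtoC r * cis t - z <> 0)%C ->
  (- Cconj z * (RtoC r * cis t) + RtoC (r * r) <> 0)%C ->
  (RtoC r * (g * (RtoC r * cis t / (RtoC r * cis t - z))) - RtoC r * g - z * (g / cis t)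
   + Cconj (g * (Cconj z * Cconj z * RtoC r * / (- Cconj z * (RtoC r * cis t) + RtoC (r * r)))))%C
  = ((g / cis t + Cconj (g / cis t)) * (z * z / (RtoC r * cis t - z)))%C.
Proof.
  intros Hr Hw Hd. pose proof (cis_neq0 t) as He.
  assert (Hrc : RtoC r <> 0%C) by (intros E; apply RtoC_inj in E; lra).
  rewrite Cdiv_conj, !Cmult_conj, Cinv_conj, Cplus_conj, Cmult_conj, Copp_conj, Cconj_conj,
    !Cconj_RtoC, Cconj_cis by auto.
  rewrite Cmult_conj, Cconj_RtoC, Cconj_cis, RtoC_mult.
  field. split; [auto | split; [auto |]].
  replace (- z * RtoC r + RtoC r * RtoC r * cis t)%C with (RtoC r * (RtoC r * cis t - z))%C by ring.
  now apply Cmult_neq_0.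
Qed.

Section Defect.

Variables (G : C -> C) (r mu : R) (z : C).
Hypothesis Hz : Cmod z < r.
Hypothesis Hmu : 0 <= mu.
Hypothesis G_holo : forall w, Cmod w <= r -> ex_Cderive G w.
Hypothesis G_Re_le : forall t, Re (Cconj (RtoC r * cis t) * G (RtoC r * cis t)) <= mu.

Let r_pos : 0 < r.
Proof. pose proof (Cmod_ge_0 z). lra. Qed.

Let h (t : R) : C := (G (RtoC r * cis t) / cis t)%C.
Let B : C := @RInt C_R_CompleteNormedModule h 0 (2 * PI).
Let reflected (u : C) : C :=
  (G u * (Cconj z * Cconj z * RtoC r * / (- Cconj z * u + RtoC (r * r))))%C.

Lemma Re_h_le t : Re (h t) <= mu / r.
Proof.
  specialize (G_Re_le t).
  replace (Cconj (RtoC r * cis t) * G (RtoC r * cis t))%C with (RtoC r * h t)%C in G_Re_le.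
  2: { unfold h. rewrite Cmult_conj, Cconj_RtoC, Cconj_cis. field. apply cis_neq0. }
  rewrite Re_RtoC_mult in G_Re_le. apply Rmult_le_reg_l with r; [lra|].
  unfold Rdiv. rewrite <- Rmult_assoc, (Rmult_comm r mu), Rmult_assoc, Rinv_r; lra.
Qed.

Lemma is_RInt_h : @is_RInt C_R_NormedModule h 0 (2 * PI) B.
Proof.
  apply (@RInt_correct C_R_CompleteNormedModule). apply ex_RInt_Ccontinuous. intros t _.
  apply (Ccontinuous_mult_comp G (fun u => RtoC r * cis u)%C (fun u => / cis u)%C);
    [apply G_holo; rewrite Cmod_scal_cis; lra | apply Ccontinuous_scal_cis |].
  apply (Ccontinuous_comp Cinv cis); [apply ex_Cderive_Cinv, cis_neq0|].
  apply (Ccontinuous_of_Lipschitz _ _ 2). intros u. apply Cmod_cis_sub_le.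
Qed.

Lemma reflected_denominator_neq0 w : Cmod w <= r -> (- Cconj z * w + RtoC (r * r) <> 0)%C.
Proof.
  intros Hw E.
  assert (E2 : (Cconj z * w)%C = RtoC (r * r)).
  { replace (Cconj z * w)%C with (- (- Cconj z * w + RtoC (r * r)) + RtoC (r * r))%C by ring.
    rewrite E. ring. }
  apply (f_equal Cmod) in E2. rewrite Cmod_mult, Cmod_conj, Cmod_R, Rabs_pos_eq in E2 by nra.
  pose proof (Cmod_ge_0 w). pose proof (Cmod_ge_0 z). nra.
Qed.

Lemma reflected_holo w : Cmod w <= r -> ex_Cderive reflected w.
Proof.
  intros Hw. apply ex_Cderive_mult; [now apply G_holo|].
  apply (ex_Cderive_mult (fun _ => Cconj z * Cconj z * RtoC r)%C);
    [apply (ex_Cderive_ext (fun u => 0 * u + Cconj z * Cconj z * RtoC r)%C); [intros; ring | apply ex_Cderive_affine]|].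
  now apply ex_Cderive_inv_affine, reflected_denominator_neq0.
Qed.

Lemma is_RInt_defect :
  @is_RInt C_R_NormedModule (fun t => (h t + Cconj (h t)) * (z * z / (RtoC r * cis t - z)))%C 0 (2 * PI)
    (RtoC r * (RtoC (2 * PI) * G z) - RtoC r * (RtoC (2 * PI) * G 0%C) - z * B
     + Cconj (RtoC (2 * PI) * reflected 0%C))%C.
Proof.
  pose proof (is_RInt_Cmult_l _ _ _ _ (RtoC r) (Cauchy_integral_formula G r z Hz G_holo)) as I1.
  pose proof (is_RInt_Cmult_l _ _ _ _ (RtoC r) (mean_value_property G r r_pos G_holo)) as I2.
  pose proof (is_RInt_Cmult_l _ _ _ _ z is_RInt_h) as I3.
  pose proof (is_RInt_Cconj _ _ _ _ (mean_value_property reflected r r_pos reflected_holo)) as I4.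
  eapply is_RInt_ext; [| exact (is_RInt_plus _ _ _ _ _ _
    (is_RInt_minus _ _ _ _ _ _ (is_RInt_minus _ _ _ _ _ _ I1 I2) I3) I4)].
  intros t _. unfold h, reflected. cbv beta.
  apply defect_integrand_eq; [lra | |].
  - exact (circle_sub_neq0 r z Hz t).
  - apply reflected_denominator_neq0. rewrite Cmod_scal_cis; lra.
Qed.

Let K : R := Cmod z ^ 2 / (r - Cmod z).

(* The one-sided bound [Re h <= mu / r] controls [|Re h|] by [2 mu / r - Re h],
   whose integral is known. *)
Lemma Cmod_defect_integrand_le t :
  Cmod ((h t + Cconj (h t)) * (z * z / (RtoC r * cis t - z))) <= 2 * K * (2 * mu / r - Re (h t)).
Proof.
  pose proof (circle_sub_neq0 r z Hz t) as Hw. pose proof (Cmod_ge_0 z) as Hz0.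
  rewrite Cplus_Cconj, Cmod_mult, Cmod_R, Cmod_div, Cmod_mult by exact Hw.
  assert (Hdist : r - Cmod z <= Cmod (RtoC r * cis t - z)).
  { pose proof (Cmod_triangle (RtoC r * cis t - z) z) as T.
    replace (RtoC r * cis t - z + z)%C with (RtoC r * cis t)%C in T by ring.
    rewrite Cmod_scal_cis in T; lra. }
  assert (Hquot : Cmod z * Cmod z / Cmod (RtoC r * cis t - z) <= K).
  { unfold K, Rdiv. rewrite <- Rsqr_pow2. apply Rmult_le_compat_l; [apply Rle_0_sqr|].
    apply Rinv_le_contravar; lra. }
  assert (Hre : Rabs (2 * Re (h t)) <= 2 * (2 * mu / r - Re (h t))).
  { pose proof (Re_h_le t). assert (0 <= mu / r) by (apply Rdiv_le_0_compat; lra).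
    apply Rabs_le. unfold Rdiv in *. split; lra. }
  assert (0 <= Cmod z * Cmod z / Cmod (RtoC r * cis t - z)) by (apply Rdiv_le_0_compat; [nra | lra]).
  rewrite (Rmult_comm 2 K), Rmult_assoc, (Rmult_comm K).
  apply Rmult_le_compat; auto using Rabs_pos.
Qed.

Lemma is_RInt_defect_bound :
  is_RInt (fun t => 2 * K * (2 * mu / r - Re (h t))) 0 (2 * PI) (2 * K * (2 * PI * (2 * mu / r) - Re B)).
Proof.
  pose proof (is_RInt_fct_extend_fst _ _ _ _ is_RInt_h) as A1.
  pose proof (@is_RInt_const R_NormedModule 0 (2 * PI) (2 * mu / r)) as A2.
  pose proof (is_RInt_scal _ _ _ (2 * K) _ (is_RInt_minus _ _ _ _ _ _ A2 A1)) as A3.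
  eapply is_RInt_ext; [| evar_last; [exact A3|]].
  - intros t _. unfold scal, minus, plus, opp; simpl. unfold mult; simpl. unfold Re. ring.
  - unfold scal, minus, plus, opp; simpl. unfold mult; simpl. unfold Re. ring.
Qed.

Lemma Cmod_Cconj_reflected_0 :
  Cmod (Cconj (RtoC (2 * PI) * reflected 0%C)) = 2 * PI * Cmod (G 0%C) * Cmod z ^ 2 / r.
Proof.
  assert (HPI : 0 < PI) by apply PI_RGT_0.
  unfold reflected. rewrite Cmod_conj.
  replace (- Cconj z * 0 + RtoC (r * r))%C with (RtoC (r * r)) by ring.
  rewrite !Cmod_mult, Cmod_inv, !Cmod_R, Cmod_conj, !Rabs_pos_eq
    by (nra || (intros E; apply RtoC_inj in E; nra)).
  field. lra.
Qed.

Lemma Cmod_defect_le :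
  Cmod (RtoC (2 * PI * r) * (G z - G 0%C) - z * B) <=
    2 * K * (4 * PI * mu / r + Cmod B) + 2 * PI * Cmod (G 0%C) * Cmod z ^ 2 / r.
Proof.
  assert (HPI : 0 < PI) by apply PI_RGT_0. pose proof (Cmod_ge_0 z).
  assert (0 <= K) by (apply Rdiv_le_0_compat; [apply pow2_ge_0 | lra]).
  pose proof (Cmod_is_RInt_le _ _ 0 (2 * PI) _ _ ltac:(lra) (fun t _ => Cmod_defect_integrand_le t)
    is_RInt_defect is_RInt_defect_bound) as Hint.
  replace (RtoC (2 * PI * r) * (G z - G 0%C) - z * B)%C with
    ((RtoC r * (RtoC (2 * PI) * G z) - RtoC r * (RtoC (2 * PI) * G 0%C) - z * B
      + Cconj (RtoC (2 * PI) * reflected 0%C)) - Cconj (RtoC (2 * PI) * reflected 0%C))%C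
    by (rewrite !RtoC_mult; ring).
  eapply Rle_trans; [apply Cmod_triangle|]. rewrite Cmod_opp, Cmod_Cconj_reflected_0.
  apply Rplus_le_compat_r. eapply Rle_trans; [exact Hint|].
  apply Rmult_le_compat_l; [lra|].
  pose proof (re_le_Cmod B) as HB. apply Rabs_le_between in HB. unfold Rdiv in *. lra.
Qed.

End Defect.

Lemma affine_defect_le (G : C -> C) (r mu : R) (z : C) : 1 <= r -> 2 * Cmod z <= r -> 0 <= mu ->
  (forall w, Cmod w <= r -> ex_Cderive G w) ->
  (forall t, Re (Cconj (RtoC r * cis t) * G (RtoC r * cis t)%C) <= mu) ->
  Cmod (G z - G 0%C - circle_slope G r * z) <=
    Cmod z ^ 2 * (8 * mu + 4 * Cmod (circle_slope G r) + Cmod (G 0%C)) / r.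
Proof.
  intros Hr Hzr Hmu HG Hre. assert (HPI : 0 < PI) by apply PI_RGT_0. pose proof (Cmod_ge_0 z) as Hz0.
  pose proof (Cmod_defect_le G r mu z ltac:(lra) Hmu HG Hre) as D.
  rewrite RInt_eq_circle_slope in D by lra. set (beta := circle_slope G r) in *.
  replace (RtoC (2 * PI * r) * (G z - G 0%C) - z * (RtoC (2 * PI * r) * beta))%C
    with (RtoC (2 * PI * r) * (G z - G 0%C - beta * z))%C in D by ring.
  rewrite !Cmod_mult, !Cmod_R, Rabs_pos_eq in D by nra.
  set (X := Cmod (G z - G 0%C - beta * z)) in *. set (b := Cmod beta) in *.
  set (g0 := Cmod (G 0%C)) in *. set (m := Cmod z ^ 2) in *.
  assert (Hb : 0 <= b) by apply Cmod_ge_0. assert (Hg0 : 0 <= g0) by apply Cmod_ge_0.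
  assert (Hm : 0 <= m) by apply pow2_ge_0.
  assert (HK : m / (r - Cmod z) <= 2 * m / r).
  { apply Rmult_le_reg_r with ((r - Cmod z) * r); [nra|].
    field_simplify; [nra | lra | lra]. }
  assert (HK0 : 0 <= m / (r - Cmod z)) by (apply Rdiv_le_0_compat; lra).
  assert (Hmu_r : 4 * PI * mu / r <= 4 * PI * mu) by (apply Rdiv_le_self; nra).
  assert (Hg_r : 2 * PI * g0 * m / r <= 2 * PI * g0 * m).
  { apply Rdiv_le_self; [|lra]. apply Rmult_le_pos; [|lra]. apply Rmult_le_pos; lra. }
  assert (Hfirst : 2 * (m / (r - Cmod z)) * (4 * PI * mu / r + 2 * PI * r * b)
                   <= 4 * m * (4 * PI * mu) + 8 * PI * m * b).
  { assert (0 <= 4 * PI * mu / r) by (apply Rdiv_le_0_compat; nra).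
    assert (0 <= 2 * PI * r * b) by (apply Rmult_le_pos; nra).
    apply Rle_trans with (2 * (2 * m / r) * (4 * PI * mu / r + 2 * PI * r * b)).
    - apply Rmult_le_compat_r; [nra | lra].
    - replace (2 * (2 * m / r) * (4 * PI * mu / r + 2 * PI * r * b))
        with (4 * m * (4 * PI * mu / r) / r + 8 * PI * m * b) by (field; lra).
      apply Rplus_le_compat_r. apply Rle_trans with (4 * m * (4 * PI * mu / r)); [|nra].
      apply Rdiv_le_self; nra. }
  apply Rmult_le_reg_l with (2 * PI * r); [nra|].
  replace (2 * PI * r * (m * (8 * mu + 4 * b + g0) / r)) with (2 * PI * (m * (8 * mu + 4 * b + g0)))
    by (field; lra).
  nra.
Qed.

(** * Entire functions with [Re (conj w * G w)] bounded above are affine *)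

Section Bounded_above.

Variables (G : C -> C) (mu M : R).
Hypothesis Hmu : 0 <= mu.
Hypothesis G_holo : forall w, ex_Cderive G w.
Hypothesis G_Re_le : forall w, M < Cmod w -> Re (Cconj w * G w) <= mu.

Let a : C := (G 1 - G 0)%C.
Let slope_bound : R := 2 * Cmod a + (8 * mu + Cmod (G 0%C)) / 4.
Let defect_const : R := 8 * mu + 4 * slope_bound + Cmod (G 0%C).

Lemma affine_defect_le_large r z : Rmax (M + 1) 1 <= r -> 2 * Cmod z <= r ->
  Cmod (G z - G 0%C - circle_slope G r * z) <=
    Cmod z ^ 2 * (8 * mu + 4 * Cmod (circle_slope G r) + Cmod (G 0%C)) / r.
Proof.
  intros Hr Hz. pose proof (Rmax_l (M + 1) 1). pose proof (Rmax_r (M + 1) 1).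
  apply affine_defect_le; [lra | exact Hz | exact Hmu | intros; apply G_holo |].
  intros t. apply G_Re_le. rewrite Cmod_scal_cis; lra.
Qed.

Lemma circle_slope_bounds r : Rmax (M + 1) 8 <= r ->
  Cmod (circle_slope G r) <= slope_bound /\ Cmod (circle_slope G r - a) <= defect_const / r.
Proof.
  intros Hr. pose proof (Rmax_l (M + 1) 8). pose proof (Rmax_r (M + 1) 8).
  set (beta := circle_slope G r). set (g0 := Cmod (G 0%C)).
  assert (Hg0 : 0 <= g0) by apply Cmod_ge_0. assert (Hb0 : 0 <= Cmod beta) by apply Cmod_ge_0.
  pose proof (affine_defect_le_large r 1%C ltac:(apply Rmax_lub; lra) ltac:(rewrite Cmod_1; lra)) as D.
  fold beta g0 in D. rewrite Cmod_1, pow1, Rmult_1_l in D.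
  replace (G 1 - G 0 - beta * 1)%C with (a - beta)%C in D by (unfold a; ring).
  assert (Hsmall : (8 * mu + 4 * Cmod beta + g0) / r <= (8 * mu + g0) / 8 + Cmod beta / 2).
  { apply Rmult_le_reg_r with (8 * r); [lra|]. field_simplify; [|lra]. nra. }
  assert (Hbeta : Cmod beta <= slope_bound).
  { pose proof (Cmod_triangle a (beta - a)) as T. replace (a + (beta - a))%C with beta in T by ring.
    replace (Cmod (beta - a)) with (Cmod (a - beta)) in T by (rewrite <- Cmod_opp; f_equal; ring).
    unfold slope_bound. fold g0. lra. }
  split; [exact Hbeta|].
  replace (Cmod (beta - a)) with (Cmod (a - beta)) by (rewrite <- Cmod_opp; f_equal; ring).
  eapply Rle_trans; [exact D|]. unfold defect_const. fold g0.
  unfold Rdiv. apply Rmult_le_compat_r; [left; apply Rinv_0_lt_compat; lra | lra].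
Qed.

Theorem affine_of_Re_conj_mul_bounded z : G z = (a * z + G 0%C)%C.
Proof.
  pose proof (Cmod_ge_0 z) as Hz0.
  assert (HC : 0 <= defect_const).
  { unfold defect_const, slope_bound. pose proof (Cmod_ge_0 a). pose proof (Cmod_ge_0 (G 0%C)). lra. }
  assert (Hd : Cmod (G z - (a * z + G 0%C)) <= 0).
  { apply (le_0_of_le_div_large _ ((Cmod z ^ 2 + Cmod z) * defect_const)
             (Rmax (Rmax (M + 1) 8) (2 * Cmod z))).
    { eapply Rlt_le_trans; [| eapply Rle_trans; [apply Rmax_r | apply Rmax_l]]. lra. }
    intros r Hr.
    assert (Hr8 : Rmax (M + 1) 8 <= r) by (eapply Rle_trans; [apply Rmax_l | exact Hr]).
    assert (Hrz : 2 * Cmod z <= r) by (eapply Rle_trans; [apply Rmax_r | exact Hr]).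
    assert (Hr1 : Rmax (M + 1) 1 <= r).
    { pose proof (Rmax_l (M + 1) 8). pose proof (Rmax_r (M + 1) 8). apply Rmax_lub; lra. }
    assert (Hr0 : 0 < r) by (pose proof (Rmax_r (M + 1) 8); lra).
    destruct (circle_slope_bounds r Hr8) as [Hb Hba].
    pose proof (affine_defect_le_large r z Hr1 Hrz) as E.
    set (beta := circle_slope G r) in *.
    replace (G z - (a * z + G 0%C))%C with ((G z - G 0%C - beta * z) + (beta - a) * z)%C by ring.
    eapply Rle_trans; [apply Cmod_triangle|]. rewrite Cmod_mult.
    assert (E' : Cmod z ^ 2 * (8 * mu + 4 * Cmod beta + Cmod (G 0%C)) / r <= Cmod z ^ 2 * defect_const / r).
    { unfold Rdiv. apply Rmult_le_compat_r; [left; apply Rinv_0_lt_compat; lra|].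
      apply Rmult_le_compat_l; [apply pow2_ge_0|]. unfold defect_const. lra. }
    assert (F : Cmod (beta - a) * Cmod z <= defect_const / r * Cmod z) by (apply Rmult_le_compat_r; lra).
    replace ((Cmod z ^ 2 + Cmod z) * defect_const / r)
      with (Cmod z ^ 2 * defect_const / r + defect_const / r * Cmod z) by (field; lra).
    lra. }
  assert (H0 : (G z - (a * z + G 0%C))%C = 0%C)
    by (apply Cmod_eq_0, Rle_antisym; [exact Hd | apply Cmod_ge_0]).
  replace (G z) with (G z - (a * z + G 0%C) + (a * z + G 0%C))%C by ring.
  rewrite H0. ring.
Qed.

End Bounded_above.

Lemma Re_conj_mul_affine (a b z : C) :
  Re (Cconj z * (a * z + b)) = Re a * Cmod z ^ 2 + Re (Cconj z * b).
Proof.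
  rewrite Cmod2_alt. destruct a as [a1 a2], b as [b1 b2], z as [x y].
  unfold Re, Im, Cconj, Cmult, Cplus; simpl. ring.
Qed.

Lemma Rabs_Re_conj_mul_le (z b : C) : Rabs (Re (Cconj z * b)) <= Cmod z * Cmod b.
Proof. rewrite <- Cmod_conj, <- Cmod_mult. apply re_le_Cmod. Qed.

Section Affine_bounded_above.

Variables (a b : C) (M : R).
Hypothesis Re_le : forall z, M < Cmod z -> Re (Cconj z * (a * z + b)) <= 1.

Lemma Re_slope_nonpos : Re a <= 0.
Proof.
  apply Rnot_lt_le. intros Ha. pose proof (Cmod_ge_0 b) as Hb.
  set (t := Rmax (Rabs M + 1) ((Cmod b + 2) / Re a)).
  assert (Ht1 : Rabs M + 1 <= t) by apply Rmax_l.
  assert (Ht2 : (Cmod b + 2) / Re a <= t) by apply Rmax_r.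
  pose proof (Rabs_pos M). pose proof (Rle_abs M).
  assert (Hat : Cmod b + 2 <= Re a * t).
  { apply Rmult_le_compat_r with (r := Re a) in Ht2; [|lra].
    replace ((Cmod b + 2) / Re a * Re a) with (Cmod b + 2) in Ht2 by (field; lra). lra. }
  specialize (Re_le (RtoC t)). rewrite Cmod_R, Rabs_pos_eq in Re_le by lra.
  specialize (Re_le ltac:(lra)). rewrite Re_conj_mul_affine, Cmod_R, Rabs_pos_eq in Re_le by lra.
  pose proof (Rabs_Re_conj_mul_le (RtoC t) b) as Hc. rewrite Cmod_R, (Rabs_pos_eq t) in Hc by lra.
  apply Rabs_le_between in Hc. nra.
Qed.

Lemma intercept_eq0 : Re a = 0 -> b = 0%C.
Proof.
  intros Ha. destruct (Ceq_dec b 0) as [|Hb]; [assumption|]. exfalso.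
  assert (Hbp : 0 < Cmod b) by (apply Cmod_gt_0; auto).
  set (t := Rmax (Rabs M / Cmod b + 1) (2 / Cmod b ^ 2)).
  assert (Ht1 : Rabs M / Cmod b + 1 <= t) by apply Rmax_l.
  assert (Ht2 : 2 / Cmod b ^ 2 <= t) by apply Rmax_r.
  assert (Ht : 0 < t).
  { assert (0 <= Rabs M / Cmod b) by (apply Rdiv_le_0_compat; [apply Rabs_pos | lra]). lra. }
  assert (HM : M < Cmod (RtoC t * b)).
  { rewrite Cmod_mult, Cmod_R, Rabs_pos_eq by lra. pose proof (Rle_abs M).
    apply Rmult_le_compat_r with (r := Cmod b) in Ht1; [|lra].
    replace ((Rabs M / Cmod b + 1) * Cmod b) with (Rabs M + Cmod b) in Ht1 by (field; lra). lra. }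
  specialize (Re_le _ HM). rewrite Re_conj_mul_affine, Ha, Rmult_0_l, Rplus_0_l in Re_le.
  replace (Re (Cconj (RtoC t * b) * b)) with (t * Cmod b ^ 2) in Re_le
    by (rewrite Cmod2_alt; destruct b as [b1 b2]; unfold Re, Im, Cconj, Cmult, RtoC; simpl; ring).
  apply Rmult_le_compat_r with (r := Cmod b ^ 2) in Ht2; [|apply pow2_ge_0].
  replace (2 / Cmod b ^ 2 * Cmod b ^ 2) with 2 in Ht2 by (field; lra). lra.
Qed.

End Affine_bounded_above.

Lemma limsup_le0_affine (a b : C) : in_Cminus a \/ (in_iR a /\ b = 0%C) ->
  limsup_at_infty_le0 (fun z => Re (Cconj z * (a * z + b))).
Proof.
  unfold in_Cminus, in_iR. intros [Ha | [Ha ->]] eps Heps.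
  - exists (Cmod b / - Re a). intros z Hz. rewrite Re_conj_mul_affine.
    pose proof (Rabs_Re_conj_mul_le z b) as Hc. apply Rabs_le_between in Hc.
    pose proof (Cmod_ge_0 b). pose proof (Cmod_ge_0 z).
    assert (Hbz : Cmod b < - Re a * Cmod z).
    { apply Rmult_lt_compat_l with (r := - Re a) in Hz; [|lra].
      replace (- Re a * (Cmod b / - Re a)) with (Cmod b) in Hz by (field; lra). exact Hz. }
    nra.
  - exists 0. intros z _. rewrite Re_conj_mul_affine, Ha.
    replace (Re (Cconj z * 0)) with 0 by (destruct z; unfold Re, Cconj, Cmult, RtoC; simpl; ring).
    lra.
Qed.

Theorem proposition2p5 (G : C -> C) (HG : entire G) :
  limsup_at_infty_le0 (fun z => Re (Cmult (Cconj z) (G z))) <->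
  exists a b : C, (forall z : C, G z = Cplus (Cmult a z) b) /\
    ((in_Cminus a) \/ (in_iR a /\ b = RtoC 0)).
Proof.
  split.
  - intros Hlim. destruct (Hlim 1 Rlt_0_1) as [M HM].
    set (a := (G 1 - G 0)%C). set (b := G 0%C).
    assert (Haff : forall z, G z = (a * z + b)%C)
      by exact (affine_of_Re_conj_mul_bounded G 1 M ltac:(lra) (entire_ex_Cderive G HG) HM).
    assert (HM' : forall z, M < Cmod z -> Re (Cconj z * (a * z + b)) <= 1)
      by (intros z Hz; rewrite <- Haff; auto).
    exists a, b. split; [exact Haff|].
    destruct (Rle_lt_or_eq_dec _ _ (Re_slope_nonpos a b M HM')) as [Hneg | Hzero].
    + left. exact Hneg.
    + right. split; [exact Hzero | exact (intercept_eq0 a b M HM' Hzero)].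
  - intros [a [b [Haff Hab]]] eps Heps.
    destruct (limsup_le0_affine a b Hab eps Heps) as [M HM].
    exists M. intros z Hz. rewrite Haff. auto.
Qed.
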